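(* Let $G$ be a finite, connected, pointed, edge-ordered graph with distinguished vertex $v_0$. For any vertices $u,v,w$ with $u\prec_D v\prec_D w$, if $u\to w$, then there exists a vertex $v'$ with $u\preceq_D v'\prec_D v$ and $v'\to v$.
   Context: A (directed) graph is $(V,\to)$ with $\to\subseteq V\times V$; $N(u)$ is the set of outgoing edges of $u$. A pointed graph has a distinguished vertex $v_0$; connected means every vertex is reachable by a path from $v_0$. A path is a finite sequence $v_1\to\cdots\to v_n$ of vertices joined by edges; proper if no vertex repeats; co-initial paths share their source; $\pi\sqsubset\sigma$ means $\pi$ is a proper prefix of $\sigma$. A finite edge-ordered graph is a finite graph with a strict linear order $\triangleleft$ on each neighborhood. Lexicographic path order on co-initial paths: if $\pi\sqsubset\sigma$ then $\pi\prec\sigma$ (symmetrically); otherwise, with $\zeta$ the longest common prefix, $u$ its target and $v_1,v_2$ the next vertices, $\pi\prec\sigma$ iff $u\to v_1\triangleleft u\to v_2$. $\min(u\rightsquigarrow v)$ is the $\prec$-least proper path from $u$ to $v$. Define $v\prec_D w$ iff $\min(v_0\rightsquigarrow v)\prec\min(v_0\rightsquigarrow w)$, and $v\preceq_D w$ iff $v\prec_D w$ or $v=w$. *)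

From mathcomp Require Import all_boot.
Set Implicit Arguments. Unset Strict Implicit. Unset Printing Implicit Defensive.

(* A finite graph: vertex type V : finType, edge relation e : rel V
   (u -> v iff e u v).  The edge order: ord u a b means
   (u -> a) ◁ (u -> b) in the neighbourhood N(u). *)

Section EdgeOrdered.
Variables (V : finType) (e : rel V) (ord : V -> rel V).

Definition edge_ordered : Prop :=
  [/\ (forall u a, e u a -> ~~ ord u a a),
      (forall u a b c, e u a -> e u b -> e u c ->
          ord u a b -> ord u b c -> ord u a c) &
      (forall u a b, e u a -> e u b -> a != b -> ord u a b || ord u b a)].

(* A path v_1 -> ... -> v_n is represented as its source x and the
   sequence p = [:: v_2; ...; v_n] (so the path is x :: p).
   plt x s t : the path x :: s is lexicographically smaller than x :: t
   (for co-initial paths). *)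
Fixpoint plt (x : V) (s t : seq V) : bool :=
  match s, t with
  | [::], [::] => false
  | [::], _ :: _ => true
  | _ :: _, [::] => false
  | a :: s', b :: t' => if a == b then plt a s' t' else ord x a b
  end.

Definition proper_path (x y : V) (p : seq V) : bool :=
  [&& path e x p, uniq (x :: p) & last x p == y].

Definition is_min_path (x y : V) (p : seq V) : Prop :=
  proper_path x y p /\
  forall q, proper_path x y q -> q = p \/ plt x p q.

Definition precD (v0 v w : V) : Prop :=
  exists p q, [/\ is_min_path v0 v p, is_min_path v0 w q & plt v0 p q].

Definition preceqD (v0 v w : V) : Prop := precD v0 v w \/ v = w.

End EdgeOrdered.

From mathcomp Require Import all_boot.
Set Implicit Arguments. Unset Strict Implicit. Unset Printing Implicit Defensive.

(* Write min(v0 ~> v) as p·v and let v' be the last vertex of p.  Prefixes of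
   minimal paths are minimal, so p = min(v0 ~> v'); hence v' ≺_D v and v' -> v.
   Since min(v0 ~> u) ≺ p·v, either min(v0 ~> u) ⪯ p, i.e. u ⪯_D v', or it
   leaves p·v right after p through an edge smaller than v' -> v.  In the
   latter case the path to u followed by u -> w (cut at w if it already passes
   through w) is a proper path to w below p·v, so min(v0 ~> w) ≺ min(v0 ~> v),
   contradicting v ≺_D w. *)

Lemma shorten_cat (T : eqType) (x : T) s t :
  uniq (x :: s) -> ~~ has (mem (belast x s)) t ->
  shorten x (s ++ t) = s ++ shorten (last x s) t.
Proof.
elim: s x => [|y s IHs] x //= /andP[xNys ys_uniq] hasNt.
have xNt : x \notin t by apply: contra hasNt => xt; apply/hasP; exists x => //; exact: mem_head.
rewrite -cat_cons mem_cat (negbTE xNys) (negbTE xNt) /= IHs //.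
by move: hasNt; apply: contra; apply: sub_has => z /= zs; exact: mem_behead.
Qed.

Section LexicographicOrder.
Variables (V : finType) (ord : V -> rel V).
Local Notation plt := (plt ord).
Implicit Types (x : V) (s t : seq V).

Lemma pltxx x s : plt x s s = false.
Proof. by elim: s x => [|a s IHs] x //=; rewrite eqxx IHs. Qed.

Lemma plts0 x s : plt x s [::] = false.
Proof. by case: s. Qed.

Lemma plt_prefix x s b t : plt x s (s ++ b :: t).
Proof. by elim: s x => [|a s IHs] x //=; rewrite eqxx IHs. Qed.

Lemma plt_diverge x s a b s' t' : a != b ->
  plt x (s ++ a :: s') (s ++ b :: t') = ord (last x s) a b.
Proof.
by move=> neq_ab; elim: s x => [|c s IHs] x /=; rewrite ?(negbTE neq_ab) ?eqxx.
Qed.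

Lemma plt_prefixl x r s t : prefix r s -> plt x s t -> plt x r t.
Proof.
elim: r s t x => [|c r IHr] [|a s] [|b t] x //=; rewrite ?plts0 //.
by case/andP=> /eqP <- r_s; case: ifP => // _; apply: IHr.
Qed.

Lemma plt_cases x s t : plt x s t ->
  (exists b t', t = s ++ b :: t') \/
  (exists z a b s' t', [/\ s = z ++ a :: s', t = z ++ b :: t', a != b &
       ord (last x z) a b]).
Proof.
elim: s x t => [|a s IHs] x [|b t] //=; first by left; exists b, t.
case: eqVneq => [<- | neq_ab] lt_st; last by right; exists [::], a, b, s, t.
case: (IHs _ _ lt_st) => [[c [t' ->]] | [z [a' [b' [s' [t' [-> -> ? ?]]]]]]].
  by left; exists c, t'.
by right; exists (a :: z), a', b', s', t'.
Qed.

Lemma plt_rcons_cases x s p v : plt x s (rcons p v) ->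
  [\/ plt x s p, s = p |
      exists a s', [/\ s = p ++ a :: s', a != v & ord (last x p) a v]].
Proof.
elim: p x s => [|c p IHp] x [|a s] //=; try by constructor.
  case: eqVneq => [_|neq_av ord_av]; first by rewrite plts0.
  by constructor 3; exists a, s.
case: eqVneq => [<- | _ ord_ac]; last by constructor 1.
case/IHp=> [lt_sp | -> | [a' [s' [-> ? ?]]]]; first by constructor 1.
  by constructor 2.
by constructor 3; exists a', s'.
Qed.

End LexicographicOrder.

Section MinimalPaths.
Variables (V : finType) (e : rel V) (ord : V -> rel V).
Hypothesis ord_edge_ordered : edge_ordered e ord.
Local Notation plt := (plt ord).
Local Notation proper_path := (proper_path e).
Local Notation is_min_path := (is_min_path e ord).
Implicit Types (x y : V) (p q r s t : seq V).

Lemma plt_trans x s t r : path e x s -> path e x t -> path e x r ->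
  plt x s t -> plt x t r -> plt x s r.
Proof.
case: ord_edge_ordered => ord_irr ord_trans _.
elim: s x t r => [|a s IHs] x [|b t] [|c r] //=.
case: (eqVneq a b) => [<- | neq_ab]; case: (eqVneq a c) => [<- | neq_ac] //.
- by move=> /andP[_ ps] /andP[_ pt] /andP[_ pr]; apply: IHs.
- move=> /andP[ea _] /andP[eb _] _ ord_ab; rewrite eq_sym (negbTE neq_ab) => ord_ba.
  by move: (ord_irr _ _ ea); rewrite (ord_trans _ _ _ _ ea eb ea ord_ab ord_ba).
- move=> /andP[ea _] /andP[eb _] /andP[ec _].
  by case: eqVneq => [<- //|_]; apply: ord_trans.
Qed.

Lemma plt_asym x s t : path e x s -> path e x t -> plt x s t -> plt x t s = false.
Proof.
move=> ps pt lt_st; apply/negP => lt_ts.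
by move: (plt_trans ps pt ps lt_st lt_ts); rewrite pltxx.
Qed.

Lemma plt_total x s t : path e x s -> path e x t -> s != t ->
  plt x s t || plt x t s.
Proof.
case: ord_edge_ordered => _ _ ord_total.
elim: s x t => [|a s IHs] x [|b t] //=.
case: (eqVneq a b) => [<- | neq_ab] /andP[ea ps] /andP[eb pt].
  by rewrite eqseq_cons eqxx; apply: IHs.
by move=> _; apply: ord_total.
Qed.

Lemma min_pathNlt x y p q : is_min_path x y p -> proper_path x y q -> plt x q p = false.
Proof.
case=> /and3P[pp _ _] min_p pq; have /and3P[pathq _ _] := pq.
by case: (min_p q pq) => [-> | lt_pq]; rewrite ?pltxx // plt_asym.
Qed.

Lemma min_path_unique x y p q : is_min_path x y p -> is_min_path x y q -> p = q.
Proof.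
move=> [pp min_p] min_q; have [pq _] := min_q.
case: (min_p q pq) => [-> // | lt_pq].
by rewrite (min_pathNlt min_q pp) in lt_pq.
Qed.

Lemma proper_path_shorten x p : path e x p -> proper_path x (last x p) (shorten x p).
Proof. by case/shortenP=> p' pp' up' _; apply/and3P. Qed.

Lemma proper_path_extend x u w p : proper_path x u p -> e u w ->
  exists2 r, proper_path x w r & prefix r p \/ r = rcons p w.
Proof.
case/and3P=> pp up /eqP lu euw; case: (boolP (w \in x :: p)) => [|wNp].
  rewrite inE; case: eqVneq => [-> _ | _ /= wp].
    by exists [::]; [rewrite /proper_path /= eqxx | left; exact: prefix0s].
  case/splitPr: wp pp up => p1 p2 pp up.
  exists (rcons p1 w); last by left; rewrite -cat_rcons prefix_prefix.
  move: pp up; rewrite /proper_path last_rcons eqxx andbT -cat_rcons cat_path.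
  by case/andP=> -> _; rewrite -cat_cons cat_uniq => /andP[-> _].
exists (rcons p w); last by right.
by rewrite /proper_path rcons_path last_rcons pp lu euw -rcons_cons rcons_uniq wNp up eqxx.
Qed.

Lemma min_path_prefix x y p1 p2 :
  is_min_path x y (p1 ++ p2) -> is_min_path x (last x p1) p1.
Proof.
move=> min_p; have [/and3P[pp up /eqP ly] _] := min_p.
move: pp up; rewrite cat_path -cat_cons cat_uniq => /andP[pp1 pp2] /and3P[up1 p1Np2 _].
move: ly; rewrite last_cat; set z := last x p1 => lz.
have pr1 : proper_path x z p1 by apply/and3P.
split=> // q pq; case: (eqVneq q p1) => [-> | neq_qp1]; [by left | right].
have /and3P[pathq uq /eqP lq] := pq.
case/orP: (plt_total pathq pp1 neq_qp1) => // lt_qp1; exfalso.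
case: (plt_cases lt_qp1) => [[b [t ep1]] | [z' [a [b [s [t [eq_q ep1 neq_ab ord_ab]]]]]]].
  have zt : z \in b :: t by rewrite /z ep1 last_cat /= mem_last.
  move: up1; rewrite ep1 -cat_cons cat_uniq => /and3P[_ /hasPn/(_ z zt)].
  by rewrite -lq mem_last.
(* Rerouting q through p2 and removing loops keeps the branch point of q. *)
have walk : path e x (q ++ p2) by rewrite cat_path pathq lq.
have short_walk : shorten x (q ++ p2) = z' ++ a :: shorten a (s ++ p2).
  move: uq; rewrite eq_q -cat_rcons -cat_cons cat_uniq => /and3P[u_za aNs _].
  rewrite -catA shorten_cat ?last_rcons ?cat_rcons // belast_rcons has_cat negb_or.
  apply/andP; split; [move: aNs | move: p1Np2]; apply: contra; apply: sub_has => v.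
    by move=> vz; rewrite -rcons_cons mem_rcons; exact: mem_behead.
  by move=> vz; rewrite ep1 -cat_cons mem_cat; apply/orP; left.
have := proper_path_shorten walk; rewrite last_cat lq lz short_walk => pr.
by move: (min_pathNlt min_p pr); rewrite ep1 -catA plt_diverge // ord_ab.
Qed.

Lemma min_path_lt_branch x u w pw p a s v :
  proper_path x u (p ++ a :: s) -> a != v -> ord (last x p) a v -> e u w ->
  is_min_path x w pw -> path e x (rcons p v) -> plt x pw (rcons p v).
Proof.
move=> pu neq_av ord_av euw min_w path_pv.
have [r pr r_def] := proper_path_extend pu euw.
have lt_r : plt x r (rcons p v).
  case: r_def => [r_pu | ->]; last by rewrite rcons_cat /= -[rcons p v]cats1 plt_diverge.
  by apply: plt_prefixl r_pu _; rewrite -cats1 plt_diverge.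
have [/and3P[path_pw _ _] min_pw] := min_w; have /and3P[path_r _ _] := pr.
by case: (min_pw r pr) => [<- // | lt_pw_r]; apply: plt_trans lt_pw_r lt_r.
Qed.

End MinimalPaths.

Theorem lemma10p2 (V : finType) (e : rel V) (ord : V -> rel V) (v0 : V)
  (Hord : edge_ordered e ord)
  (Hconn : forall v : V, connect e v0 v)
  (u v w : V) :
  precD e ord v0 u v -> precD e ord v0 v w -> e u w ->
  exists v' : V,
    [/\ preceqD e ord v0 u v', precD e ord v0 v' v & e v' v].
Proof.
move=> [pu [pv [min_u min_v lt_uv]]] [pv' [pw [min_v' min_w lt_vw]]] euw.
rewrite (min_path_unique Hord min_v' min_v) in lt_vw.
case/lastP: pv min_v lt_uv lt_vw => [|p v1 min_v lt_uv lt_vw]; first by rewrite plts0.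
have [/and3P[path_pv _ /eqP]] := min_v; rewrite last_rcons => ev1; subst v1.
have min_p : is_min_path e ord v0 (last v0 p) p.
  by move: min_v; rewrite -cats1; apply: min_path_prefix.
exists (last v0 p); split.
- case: (plt_rcons_cases lt_uv) => [lt_up | epu | [a [s [epu neq_av ord_av]]]].
  + by left; exists pu, p.
  + by right; case: min_u => /and3P[_ _ /eqP <-]; rewrite epu.
  + have [pu_proper _] := min_u; rewrite epu in pu_proper.
    have lt_wv := min_path_lt_branch Hord pu_proper neq_av ord_av euw min_w path_pv.
    have [/and3P[path_pw _ _] _] := min_w.
    by rewrite (plt_asym Hord path_pw path_pv lt_wv) in lt_vw.
- by exists p, (rcons p v); split; rewrite // -cats1 plt_prefix.
- by move: path_pv; rewrite rcons_path => /andP[].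
Qed.
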